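(* Let $\boldsymbol{\mu}=(\mu_s)_{s\ge1}$ be a fixed probability distribution on $\{1,2,\dots\}$ with $\mu_1>0$ and $\sum_{s=1}^\infty s\mu_s<\infty$, for each $n$ let $\Pi_n\sim ESC_{[n]}(\boldsymbol{\mu})$, and let $M_n$ be the size of the largest cluster of $\Pi_n$. Then $M_n/n\xrightarrow{p}0$ as $n\to\infty$.
   Context: For a fixed distribution $\boldsymbol{\mu}$ on the positive integers with $\mu_1>0$, $ESC_{[n]}(\boldsymbol{\mu})$ is the law of the following random partition of $[n]=\{1,\dots,n\}$: let $S_1,S_2,\dots$ be i.i.d. with law $\boldsymbol{\mu}$, condition on the event $E_n$ that $\sum_{j=1}^k S_j=n$ for some $k\in\mathbb{N}$, let $K$ be that unique $k$, and let $(z_1,\dots,z_n)$ be a uniformly random permutation of the vector with $S_1$ copies of $1$, ..., $S_K$ copies of $K$; the partition has blocks $\{i:z_i=j\}$, $j=1,\dots,K$ (so it has $K$ clusters of sizes $S_1,\dots,S_K$). $\xrightarrow{p}$ denotes convergence in probability. *)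

From HB Require Import structures.
From mathcomp Require Import all_boot all_order all_algebra.
From mathcomp Require Import all_classical all_reals all_analysis.
Set Implicit Arguments. Unset Strict Implicit. Unset Printing Implicit Defensive.
Import Order.TTheory GRing.Theory Num.Theory.
Local Open Scope ring_scope.

(* A sequence (S_1,...,S_k) of cluster sizes, each part stored in 'I_n.+1. *)
Definition is_comp (n k : nat) (s : {ffun 'I_k -> 'I_n.+1}) : bool :=
  [forall i, (0 < s i)%N] && ((\sum_(i < k) (s i : nat))%N == n).

(* P(S_1 = s_1, ..., S_k = s_k) for i.i.d. S_j ~ mu. *)
Definition comp_weight (R : realType) (mu : nat -> R) (n k : nat)
  (s : {ffun 'I_k -> 'I_n.+1}) : R := \prod_(i < k) mu (s i).

Definition arrangements (n k : nat) (s : {ffun 'I_k -> 'I_n.+1})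
  : {set {ffun 'I_n -> 'I_k}} :=
  [set z : {ffun 'I_n -> 'I_k} | [forall j, #|[set i | z i == j]| == s j]].

Definition cluster_partition (n k : nat) (z : {ffun 'I_n -> 'I_k})
  : {set {set 'I_n}} := [set [set i | z i == j] | j : 'I_k].

Definition max_block (n : nat) (P : {set {set 'I_n}}) : nat :=
  (\max_(B in P) #|B|)%N.

(* P(E_n): some partial sum equals n (events over k are disjoint). *)
Definition prob_E (R : realType) (mu : nat -> R) (n : nat) : R :=
  \sum_(k < n.+1) \sum_(s : {ffun 'I_k -> 'I_n.+1} | is_comp s)
     comp_weight mu s.

Definition esc_prob (R : realType) (mu : nat -> R) (n : nat)
  (Ev : {set {set 'I_n}} -> bool) : R :=
  (\sum_(k < n.+1) \sum_(s : {ffun 'I_k -> 'I_n.+1} | is_comp s)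
     comp_weight mu s *
     (#|[set z in arrangements s | Ev (cluster_partition z)]|%:R
       / #|arrangements s|%:R)) / prob_E mu n.
Arguments esc_prob {R} mu n Ev.

(* Conditionally on the cluster sizes (S_1, ..., S_K), the event "some cluster
   exceeds eps n" has probability at most the number of sizes exceeding eps n
   (union bound), so

     P(M_n > eps n) <= E[#{j : S_j > eps n}; E_n] / P(E_n).

   Both numerator and denominator satisfy renewal-type recursions obtained by
   splitting off the first part of a composition of n; we compute with them
   through [comp_sum], a sum over compositions indexed by their first part.
   - Numerator: at most n parts, each exceeding eps n with probability
     P(eps n < S <= n) <= (eps n)^-1 E[S; S > eps n]; finiteness of the mean
     makes this o(1/n), so the numerator vanishes.
   - Denominator: the renewal identity sum_(i <= n) U(i) P(S > n - i) = 1,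
     the tail bound sum_(j >= J) P(S > j) <= 1/2 for J large (finite mean) and
     U(n) >= mu(1)^j U(n - j) give the uniform bound U(n) >= mu(1)^J / (2 J). *)
From HB Require Import structures.
From mathcomp Require Import all_boot all_order all_algebra.
From mathcomp Require Import all_classical all_reals all_analysis.
From mathcomp Require Import zify ring lra.
Import Order.TTheory GRing.Theory Num.Theory.
Import numFieldNormedType.Exports.
Local Open Scope classical_set_scope.
Local Open Scope ring_scope.
Set Implicit Arguments. Unset Strict Implicit.

Section Compositions.
Variable R : numDomainType.
Implicit Types (Phi : seq nat -> R) (n k : nat).

(* [comp_sum n k Phi] sums [Phi] over the lists of [k] positive integers with
   sum [n], enumerated by their first entry. *)
Fixpoint comp_sum n k Phi : R :=
  match k with
  | 0 => if n == 0%N then Phi [::] else 0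
  | k'.+1 => \sum_(t < n) comp_sum (n - t.+1) k' (fun l => Phi (t.+1 :: l))
  end.

Lemma comp_sumD n k Phi1 Phi2 :
  comp_sum n k (fun l => Phi1 l + Phi2 l) = comp_sum n k Phi1 + comp_sum n k Phi2.
Proof.
elim: k n Phi1 Phi2 => [|k IH] n Phi1 Phi2 /=; first by case: eqP; rewrite ?addr0.
by rewrite -big_split; apply: eq_bigr => t _; apply: IH.
Qed.

Lemma comp_sumZ n k c Phi :
  comp_sum n k (fun l => c * Phi l) = c * comp_sum n k Phi.
Proof.
elim: k n Phi => [|k IH] n Phi /=; first by case: eqP; rewrite ?mulr0.
by rewrite mulr_sumr; apply: eq_bigr => t _; apply: IH.
Qed.

Lemma comp_sum_ge0 n k Phi : (forall l, 0 <= Phi l) -> 0 <= comp_sum n k Phi.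
Proof.
elim: k n Phi => [|k IH] n Phi Phi_ge0 /=; first by case: eqP.
by apply: sumr_ge0 => t _; apply: IH.
Qed.

Lemma comp_sum_overfull n k Phi : (n < k)%N -> comp_sum n k Phi = 0.
Proof.
elim: k n Phi => [|k IH] n Phi //= lt_nk.
by apply: big1 => t _; apply: IH; have := ltn_ord t; lia.
Qed.

Definition all_comp_sum Phi n : R := \sum_(k < n.+1) comp_sum n k Phi.

Lemma all_comp_sumD Phi1 Phi2 n :
  all_comp_sum (fun l => Phi1 l + Phi2 l) n = all_comp_sum Phi1 n + all_comp_sum Phi2 n.
Proof. by rewrite -big_split; apply: eq_bigr => k _; apply: comp_sumD. Qed.

Lemma all_comp_sumZ c Phi n :
  all_comp_sum (fun l => c * Phi l) n = c * all_comp_sum Phi n.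
Proof. by rewrite mulr_sumr; apply: eq_bigr => k _; apply: comp_sumZ. Qed.

Lemma all_comp_sum_ge0 Phi n : (forall l, 0 <= Phi l) -> 0 <= all_comp_sum Phi n.
Proof. by move=> Phi_ge0; apply: sumr_ge0 => k _; apply: comp_sum_ge0. Qed.

Lemma all_comp_sum0 Phi : all_comp_sum Phi 0 = Phi [::].
Proof. by rewrite /all_comp_sum big_ord1. Qed.

Lemma all_comp_sumS Phi n :
  all_comp_sum Phi n.+1 =
  \sum_(t < n.+1) all_comp_sum (fun l => Phi (t.+1 :: l)) (n - t).
Proof.
rewrite /all_comp_sum big_ord_recl /= add0r exchange_big /=.
apply: eq_bigr => t _; rewrite subSS.
have le_tn : ((n - t).+1 <= n.+1)%N by rewrite ltnS leq_subr.
rewrite (big_ord_widen n.+1 (fun k => comp_sum (n - t) k _) le_tn).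
rewrite (bigID (fun k : 'I_n.+1 => (k < (n - t).+1)%N)) /= [X in _ + X]big1 ?addr0.
  by apply: eq_bigr => k _; rewrite add0n.
by move=> k; rewrite -leqNgt => lt_k; apply: comp_sum_overfull.
Qed.

End Compositions.

Section FiniteSums.
Variable R : numDomainType.

Lemma sum_le_subfilter (I : finType) (P Q : pred I) (F : I -> R) :
  (forall i, Q i -> 0 <= F i) -> (forall i, P i -> Q i) ->
  \sum_(i | P i) F i <= \sum_(i | Q i) F i.
Proof.
move=> F_ge0 PQ; rewrite [leRHS](bigID P) /= (eq_bigl P) ?lerDl.
  by apply: sumr_ge0 => i /andP[/F_ge0].
by move=> i; case: (boolP (P i)) => [/PQ ->|]; rewrite ?andbF.
Qed.

Lemma sum_const_ord_lt m t (c : R) :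
  \sum_(j < m | (j < t)%N) c = (minn m t)%:R * c.
Proof.
elim: m => [|m IH]; first by rewrite big_ord0 min0n mul0r.
rewrite big_mkcond big_ord_recr /= -big_mkcond IH.
case: (ltnP m t) => [lt_mt|le_tm].
  by rewrite (minn_idPl lt_mt) -natr1 mulrDl mul1r.
by rewrite addr0 (minn_idPr (leqW le_tm)).
Qed.

Lemma sum_residuals_le (f : nat -> R) J n M : (forall s, 0 <= f s) -> (n <= M)%N ->
  \sum_(j < n.+1 | (J <= j)%N) (\sum_(t < M.+1) f t - \sum_(t < j.+1) f t)
  <= \sum_(t < M.+1 | (J <= t)%N) t%:R * f t.
Proof.
move=> f_ge0 le_nM.
have residual (j : 'I_n.+1) :
    \sum_(t < M.+1) f t - \sum_(t < j.+1) f t = \sum_(t < M.+1 | (j < t)%N) f t.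
  have le_jM : (j.+1 <= M.+1)%N by rewrite ltnS (leq_trans _ le_nM) // -ltnS.
  rewrite (big_ord_widen M.+1 f le_jM) [X in X - _](bigID (fun t : 'I_M.+1 => (t < j.+1)%N)).
  by rewrite /= addrC addrK; apply: eq_bigl => t; rewrite ltnS -ltnNge.
rewrite (eq_bigr _ (fun j _ => residual j)).
rewrite (exchange_big_dep xpredT) //= [leRHS]big_mkcond ler_sum // => t _.
case: (leqP J t) => [le_Jt|lt_tJ]; last by rewrite big1 // => j /andP[]; lia.
apply: (le_trans (sum_le_subfilter (Q := fun j : 'I_n.+1 => (j < t)%N) _ _)) => //.
  by move=> j /andP[].
by rewrite sum_const_ord_lt ler_wpM2r // ler_nat geq_minr.
Qed.

End FiniteSums.

Section FfunCompositions.
Variable R : numDomainType.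

Definition ffun_seq (k B : nat) (s : {ffun 'I_k -> 'I_B}) : seq nat :=
  [seq val (s i) | i <- enum 'I_k].

Definition composes (B n k : nat) (s : {ffun 'I_k -> 'I_B}) : bool :=
  [forall i, (0 < s i)%N] && ((\sum_(i < k) (s i : nat))%N == n).

Definition cons_ffun (T : Type) k (x : T) (g : {ffun 'I_k -> T}) :
  {ffun 'I_k.+1 -> T} := [ffun i => if unlift ord0 i is Some j then g j else x].

Lemma cons_ffun0 (T : Type) k (x : T) g : @cons_ffun T k x g ord0 = x.
Proof. by rewrite ffunE unlift_none. Qed.

Lemma cons_ffunS (T : Type) k (x : T) g j : @cons_ffun T k x g (lift ord0 j) = g j.
Proof. by rewrite ffunE liftK. Qed.

Lemma big_ffun_cons (T : finType) k (F : {ffun 'I_k.+1 -> T} -> R) :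
  \sum_f F f = \sum_(x : T) \sum_(g : {ffun 'I_k -> T}) F (cons_ffun x g).
Proof.
rewrite pair_big /= (reindex (fun p : T * {ffun 'I_k -> T} => cons_ffun p.1 p.2)) //=.
exists (fun f => (f ord0, [ffun j => f (lift ord0 j)])) => [[x g] _|f _] /=.
  by rewrite cons_ffun0; congr pair; apply/ffunP => j; rewrite ffunE cons_ffunS.
by apply/ffunP => i; rewrite ffunE; case: unliftP => [j ->|->]; rewrite ?ffunE.
Qed.

Lemma ffun_seq_cons k B (x : 'I_B) (g : {ffun 'I_k -> 'I_B}) :
  ffun_seq (cons_ffun x g) = val x :: ffun_seq g.
Proof.
rewrite /ffun_seq enum_ordSl /= cons_ffun0 -map_comp; congr cons.
by apply: eq_map => j /=; rewrite cons_ffunS.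
Qed.

Lemma composes_cons B n k (x : 'I_B) (g : {ffun 'I_k -> 'I_B}) :
  composes n (cons_ffun x g) = [&& (0 < x)%N, (x <= n)%N & composes (n - x) g].
Proof.
rewrite /composes big_ord_recl cons_ffun0.
under eq_bigr do rewrite cons_ffunS.
have -> : [forall i, (0 < cons_ffun x g i)%N] = (0 < x)%N && [forall i, (0 < g i)%N].
  apply/forallP/andP => [pos_xg|[pos_x /forallP pos_g] i].
    split; first by have := pos_xg ord0; rewrite cons_ffun0.
    by apply/forallP => j; have := pos_xg (lift ord0 j); rewrite cons_ffunS.
  by case: (unliftP ord0 i) => [j ->|->]; rewrite ?cons_ffunS ?cons_ffun0.
case: (0 < x)%N; case: [forall i, (0 < g i)%N]; rewrite /= ?andbF //.
by apply/eqP/andP => [<-|[le_xn /eqP ->]]; [rewrite leq_addr addKn | rewrite subnKC].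
Qed.

Lemma sum_composes B n k (Phi : seq nat -> R) : (n < B)%N ->
  \sum_(s : {ffun 'I_k -> 'I_B} | composes n s) Phi (ffun_seq s) = comp_sum n k Phi.
Proof.
case: B => // B; elim: k n Phi => [|k IH] n Phi lt_nB.
  have seq0 (s : {ffun 'I_0 -> 'I_B.+1}) : ffun_seq s = [::] by rewrite /ffun_seq enum_ord0.
  have comp0 (s : {ffun 'I_0 -> 'I_B.+1}) : composes n s = (n == 0%N).
    by rewrite /composes big_ord0 eq_sym; case: forallP => // -[] [].
  under eq_bigl do rewrite comp0.
  under eq_bigr do rewrite seq0.
  rewrite /=; case: eqP => _; last by rewrite big_pred0_eq.
  by rewrite sumr_const card_ffun !card_ord expn0.
rewrite big_mkcond big_ffun_cons /=.
under eq_bigr => x _.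
  under eq_bigr do rewrite composes_cons ffun_seq_cons.
  over.
rewrite big_ord_recl /= big1 ?add0r //.
rewrite (big_ord_widen B (fun t => comp_sum (n - t.+1) k (fun l => Phi (t.+1 :: l)))) //.
rewrite [RHS]big_mkcond; apply: eq_bigr => i _; rewrite /bump add1n; case: ltnP => lt_in /=.
  by rewrite -big_mkcond (IH _ (fun l => Phi (i.+1 :: l))) //; lia.
by rewrite big1.
Qed.

End FfunCompositions.

Section Renewal.
Variable R : numDomainType.
Variable mu : nat -> R.
Hypothesis mu_ge0 : forall s, 0 <= mu s.
Hypothesis mu0 : mu 0%N = 0.
Hypothesis mu_sub : forall j, \sum_(t < j) mu t <= 1.

Definition weight (l : seq nat) : R := \prod_(x <- l) mu x.

(* The renewal sequence: [renewal n] is the probability that some partial sum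
   equals [n], i.e. P(E_n). *)
Definition renewal (n : nat) : R := all_comp_sum weight n.

(* Expected number of parts satisfying [P] among the parts of a composition,
   restricted to the event E_n. *)
Definition big_parts (P : pred nat) (n : nat) : R :=
  all_comp_sum (fun l => weight l * (count P l)%:R) n.

Definition survival (j : nat) : R := 1 - \sum_(t < j.+1) mu t.

Definition part_mass (P : pred nat) (m : nat) : R :=
  \sum_(t < m) mu t.+1 * (P t.+1)%:R.

Lemma weight_ge0 l : 0 <= weight l.
Proof. exact: prodr_ge0. Qed.

Lemma renewal0 : renewal 0 = 1.
Proof. by rewrite /renewal all_comp_sum0 /weight big_nil. Qed.

Lemma renewalS n : renewal n.+1 = \sum_(t < n.+1) mu t.+1 * renewal (n - t).
Proof.
rewrite /renewal all_comp_sumS; apply: eq_bigr => t _.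
by rewrite -all_comp_sumZ; congr all_comp_sum; apply/funext => l; rewrite /weight big_cons.
Qed.

Lemma big_parts0 P : big_parts P 0 = 0.
Proof. by rewrite /big_parts all_comp_sum0 mulr0. Qed.

Lemma big_partsS P n : big_parts P n.+1 = \sum_(t < n.+1)
  (mu t.+1 * (P t.+1)%:R * renewal (n - t) + mu t.+1 * big_parts P (n - t)).
Proof.
rewrite /big_parts all_comp_sumS; apply: eq_bigr => t _.
rewrite /renewal -!all_comp_sumZ -all_comp_sumD; congr all_comp_sum.
by apply/funext => l; rewrite /weight big_cons /= natrD; ring.
Qed.

Lemma renewal_ge0 n : 0 <= renewal n.
Proof. exact/all_comp_sum_ge0/weight_ge0. Qed.

Lemma big_parts_ge0 P n : 0 <= big_parts P n.
Proof. by apply: all_comp_sum_ge0 => l; rewrite mulr_ge0 ?weight_ge0. Qed.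

Lemma part_mass_ge0 P m : 0 <= part_mass P m.
Proof. by apply: sumr_ge0 => t _; rewrite mulr_ge0. Qed.

Lemma part_mass_mono P m m' : (m <= m')%N -> part_mass P m <= part_mass P m'.
Proof.
move=> le_mm'; rewrite /part_mass (big_ord_widen m' (fun t => mu t.+1 * (P t.+1)%:R) le_mm') [leRHS](bigID (fun t : 'I_m' => (t < m)%N)) /=.
by rewrite lerDl; apply: sumr_ge0 => t _; rewrite mulr_ge0.
Qed.

Lemma shifted_mass_le1 n : \sum_(t < n) mu t.+1 <= 1.
Proof. by have := mu_sub n.+1; rewrite big_ord_recl mu0 add0r. Qed.

Lemma renewal_le1 n : renewal n <= 1.
Proof.
elim/ltn_ind: n => -[|n] IH; first by rewrite renewal0.
rewrite renewalS; apply: le_trans (shifted_mass_le1 n.+1); apply: ler_sum => t _.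
by rewrite ler_piMr // IH // ltnS leq_subr.
Qed.

(* Appending parts of size 1: U(n) >= mu(1)^(n-i) U(i). *)
Lemma renewal_pow i n : (i <= n)%N -> mu 1%N ^+ (n - i) * renewal i <= renewal n.
Proof.
elim: n => [|n IH] le_in.
  by move: le_in; rewrite leqn0 => /eqP ->; rewrite expr0 mul1r.
case: (ltngtP i n.+1) le_in => // [lt_in|->] _; last by rewrite subnn expr0 mul1r.
have step : mu 1%N * renewal n <= renewal n.+1.
  rewrite renewalS big_ord_recl /= subn0 lerDl.
  by apply: sumr_ge0 => t _; rewrite mulr_ge0 ?renewal_ge0.
rewrite subSn // exprS -mulrA; apply: le_trans step.
by apply: ler_wpM2l => //; apply: IH.
Qed.

Lemma renewal_identity n : \sum_(i < n.+1) renewal i * survival (n - i) = 1.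
Proof.
have survival0 : survival 0 = 1 by rewrite /survival big_ord1 mu0 subr0.
elim: n => [|n IH]; first by rewrite big_ord1 renewal0 survival0 mul1r.
rewrite big_ord_recr /= subnn survival0 mulr1.
have step (i : 'I_n.+1) : renewal i * survival (n.+1 - i) =
    renewal i * survival (n - i) - renewal i * mu (n.+1 - i)%N.
  have le_in : (i <= n)%N := ltn_ord i.
  rewrite -mulrBr /survival (subSn le_in) big_ord_recr /= opprD addrA.
  by rewrite -(subSn le_in).
rewrite (eq_bigr _ (fun i _ => step i)) sumrB IH renewalS.
rewrite [X in 1 - X + _](reindex_inj rev_ord_inj) /=.
rewrite [X in 1 - X + _](eq_bigr (fun t : 'I_n.+1 => mu t.+1 * renewal (n - t))) ?subrK //.
move=> t _; rewrite subSS mulrC; congr (mu _ * _).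
by have := ltn_ord t; lia.
Qed.

(* Each part satisfying [P] contributes at most [part_mass P n] to
   [big_parts P n], and there are at most [n] parts. *)
Lemma big_parts_le P n : big_parts P n <= n%:R * part_mass P n.
Proof.
elim/ltn_ind: n => -[|m] IH; first by rewrite big_parts0 mul0r.
rewrite big_partsS big_split /= -natr1 mulrDl mul1r [leRHS]addrC.
apply: lerD.
  rewrite /part_mass; apply: ler_sum => t _.
  by rewrite ler_piMr ?renewal_le1 ?mulr_ge0.
have mass_ge0 := part_mass_ge0 P m.+1.
apply: (@le_trans _ _ (\sum_(t < m.+1) mu t.+1 * (m%:R * part_mass P m.+1))).
  apply: ler_sum => t _; apply: ler_wpM2l => //.
  apply: le_trans (IH (m - t)%N _) _; first by rewrite ltnS leq_subr.
  apply: ler_pM; rewrite ?part_mass_ge0 ?ler_nat ?leq_subr //.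
  exact/part_mass_mono/(leq_trans (leq_subr t m) (leqnSn m)).
by rewrite -mulr_suml ler_piMl ?mulr_ge0 ?shifted_mass_le1.
Qed.

End Renewal.

Section EscReduction.
Variable R : realType.
Variable mu : nat -> R.
Hypothesis mu_ge0 : forall s, 0 <= mu s.

Lemma comp_weightE n k (s : {ffun 'I_k -> 'I_n.+1}) :
  comp_weight mu s = weight mu (ffun_seq s).
Proof. by rewrite /comp_weight /weight /ffun_seq big_map big_enum. Qed.

Lemma prob_E_renewal n : prob_E mu n = renewal mu n.
Proof.
apply: eq_bigr => k _; rewrite -(@sum_composes _ n.+1) //.
by apply: eq_bigr => s _; rewrite comp_weightE.
Qed.

(* Union bound: given the cluster sizes [s], the conditional probability that
   some cluster is larger than [eps * n] is at most the number of such sizes. *)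
Lemma large_cluster_ratio_le (eps : R) n k (s : {ffun 'I_k -> 'I_n.+1}) :
  0 < eps ->
  #|[set z in arrangements s | eps < (max_block (cluster_partition z))%:R / n%:R]|%:R
    / #|arrangements s|%:R
  <= (count (fun t : nat => eps * n%:R < t%:R) (ffun_seq s))%:R :> R.
Proof.
move=> eps_gt0; set P := (fun t : nat => eps * n%:R < t%:R).
have [has_large|no_large] := boolP (has P (ffun_seq s)).
  apply: (@le_trans _ _ 1); last by rewrite ler1n -has_count.
  have [->|arr_gt0] := posnP #|arrangements s|; first by rewrite invr0 mulr0.
  rewrite ler_pdivrMr ?ltr0n // mul1r ler_nat.
  by apply/subset_leq_card/fintype.subsetP => z; rewrite inE => /andP[].
suff -> : [set z in arrangements s | eps < (max_block (cluster_partition z))%:R / n%:R]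
  = finset.set0 by rewrite cards0 mul0r.
apply/finset.setP => z; rewrite !inE; apply/negbTE/negP => /andP[z_arr].
apply/negP; rewrite -leNgt.
have max_le : ((max_block (cluster_partition z))%:R <= eps * n%:R :> R).
  apply: (big_ind (fun m : nat => (m%:R <= eps * n%:R :> R))).
  - by rewrite mulr_ge0 // ltW.
  - by move=> x y hx hy; rewrite /maxn; case: ifP.
  move=> B /imsetP[j _ ->]; move: z_arr => /forallP /(_ j) /eqP ->.
  move/hasPn: no_large => /(_ (val (s j))); rewrite leNgt; apply.
  by apply: (map_f (fun i => val (s i))); rewrite mem_enum.
have [n0|n_gt0] := posnP n; first by rewrite [X in _ / X%:R]n0 invr0 mulr0 ltW.
by rewrite ler_pdivrMr ?ltr0n.
Qed.

Lemma esc_prob_le (eps : R) n : 0 < eps ->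
  esc_prob mu n (fun P => eps < (max_block P)%:R / n%:R) <=
  big_parts mu (fun t : nat => eps * n%:R < t%:R) n / renewal mu n.
Proof.
move=> eps_gt0; rewrite /esc_prob prob_E_renewal; apply: ler_wpM2r.
  by rewrite invr_ge0 renewal_ge0.
apply: ler_sum => k _; rewrite -(@sum_composes _ n.+1) //; apply: ler_sum => s _.
rewrite comp_weightE; apply: ler_wpM2l; first exact: weight_ge0.
exact: large_cluster_ratio_le.
Qed.

End EscReduction.

Section SeriesFacts.
Variable R : realType.
Variables (f : nat -> R) (l : R).
Hypothesis f_ge0 : forall s, 0 <= f s.
Hypothesis f_cvg : series f @ \oo --> l.

Lemma series_partial_le j : \sum_(t < j) f t <= l.
Proof.
have series_ord k : series f k = \sum_(t < k) f t by rewrite /series /= big_mkord.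
have f_nd : {homo series f : n m / (n <= m)%N >-> n <= m}.
  move=> n m le_nm; rewrite !series_ord (big_ord_widen m f le_nm).
  by rewrite [leRHS](bigID (fun t : 'I_m => (t < n)%N)) /= lerDl sumr_ge0.
rewrite -series_ord (le_trans (nondecreasing_cvgn_le f_nd (cvgP _ f_cvg) j)) //.
by rewrite (cvg_lim _ f_cvg).
Qed.

Lemma series_tail_small d : 0 < d -> exists N, l - \sum_(t < N) f t < d.
Proof.
move=> d_gt0; move/cvgrPdist_lt: f_cvg => /(_ d d_gt0) [N _ near_N].
exists N; have := near_N N (leqnn N); rewrite /series /= big_mkord.
exact: le_lt_trans (ler_norm _).
Qed.

Lemma series_tail_le N K : \sum_(t < K | (N <= t)%N) f t <= l - \sum_(t < N) f t.
Proof.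
rewrite lerBrDl; apply: le_trans (series_partial_le (N + K)).
rewrite (big_ord_widen (N + K) f (leq_addr K N)).
rewrite [leRHS](bigID (fun t : 'I_(N + K) => (t < N)%N)) /= lerD2l.
rewrite (big_ord_widen_cond (N + K) (fun t => N <= t)%N f (leq_addl N K)).
rewrite [leLHS]big_mkcond [leRHS]big_mkcond ler_sum // => t _.
by rewrite -leqNgt; case: (N <= t)%N; case: (t < K)%N.
Qed.

End SeriesFacts.

Section RenewalLowerBound.
Variable R : realType.
Variable mu : nat -> R.
Hypothesis mu_ge0 : forall s, 0 <= mu s.
Hypothesis mu0 : mu 0%N = 0.
Hypothesis mu_prob : series mu @ \oo --> (1 : R).

Let mu_sub : forall j, \sum_(t < j) mu t <= 1 := series_partial_le mu_ge0 mu_prob.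

Lemma survival_ge0 j : 0 <= survival mu j.
Proof. by rewrite subr_ge0 mu_sub. Qed.

Lemma survival_tail_le J :
  (forall K, \sum_(t < K | (J <= t)%N) t%:R * mu t <= 4^-1) ->
  forall n, \sum_(j < n.+1 | (J <= j)%N) survival mu j <= 2^-1.
Proof.
move=> mean_tail n; set d : R := (4 * n.+1%:R)^-1.
have d_gt0 : 0 < d by rewrite invr_gt0 mulr_gt0 // ltr0n.
move/cvgrPdist_lt: mu_prob => /(_ d d_gt0) [M0 _ near_M0].
set M := (M0 + n)%N; set S := \sum_(t < M.+1) mu t.
have S_close : 1 - S <= d.
  have := near_M0 M.+1 (leq_trans (leq_addr n M0) (leqnSn _)).
  by rewrite /series /= big_mkord => /(le_lt_trans (ler_norm _))/ltW.
have split_survival (j : 'I_n.+1) :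
  survival mu j = (S - \sum_(t < j.+1) mu t) + (1 - S) by rewrite /survival; ring.
rewrite (eq_bigr _ (fun j _ => split_survival j)) big_split /=.
have residual_le := le_trans (sum_residuals_le J mu_ge0 (leq_addl M0 n)) (mean_tail M.+1).
have defect_le : \sum_(j < n.+1 | (J <= j)%N) (1 - S) <= 4^-1.
  apply: le_trans (sum_le_subfilter (Q := xpredT) _ _) _ => //.
    by move=> j _; rewrite subr_ge0 mu_sub.
  rewrite sumr_const card_ord -[_ *+ _]mulr_natl.
  apply: le_trans (ler_wpM2l _ S_close) _ => //.
  by rewrite /d invfM mulrCA mulfV ?mulr1 // pnatr_eq0.
lra.
Qed.

(* Renewal lower bound: from 1 = sum_j U(n-j) P(S > j), the terms with
   j >= J contribute at most 1/2, and each of the J other terms is at most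
   U(n) / mu(1)^J. *)
Lemma renewal_lower_bound J : (0 < J)%N ->
  (forall n, \sum_(j < n.+1 | (J <= j)%N) survival mu j <= 2^-1) ->
  forall n, mu 1%N ^+ J / (2 * J%:R) <= renewal mu n.
Proof.
move=> J_gt0 survival_tail n.
have identity : \sum_(j < n.+1) renewal mu (n - j) * survival mu j = 1.
  rewrite -(renewal_identity mu0 n) (reindex_inj rev_ord_inj); apply: eq_bigr => j _.
  by rewrite /= subSS subKn // -ltnS.
rewrite (bigID (fun j : 'I_n.+1 => (j < J)%N)) /= in identity.
move: identity; set A := \sum_(j < n.+1 | (j < J)%N) _; set B := \sum_(j < n.+1 | _) _.
move=> identity.
have mu1_le1 : mu 1%N <= 1 by have := mu_sub 2; rewrite big_ord_recr big_ord1 /= mu0 add0r.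
have B_le : B <= 2^-1.
  apply: le_trans (survival_tail n); rewrite /B; under eq_bigl do rewrite -leqNgt.
  apply: ler_sum => j _; rewrite ler_piMl ?survival_ge0 //.
  exact: renewal_le1.
have A_le : mu 1%N ^+ J * A <= J%:R * renewal mu n.
  rewrite /A mulr_sumr; apply: (@le_trans _ _ (\sum_(j < n.+1 | (j < J)%N) renewal mu n)).
    apply: ler_sum => j lt_jJ.
    have := renewal_pow mu_ge0 (leq_subr j n); rewrite subKn ?leq_ord //.
    apply: le_trans; rewrite mulrA.
    have survival_le1 : survival mu j <= 1 by rewrite lerBlDr lerDl sumr_ge0.
    apply: le_trans (ler_piMr _ survival_le1) _.
      by rewrite mulr_ge0 ?exprn_ge0 ?renewal_ge0.
    by rewrite ler_wpM2r ?renewal_ge0 // ler_wiXn2l // ltnW.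
  by rewrite sum_const_ord_lt ler_wpM2r ?renewal_ge0 // ler_nat geq_minr.
have : mu 1%N ^+ J <= 2 * (J%:R * renewal mu n).
  have := ler_wpM2l (exprn_ge0 J (mu_ge0 1%N)) (lerD (lexx A) B_le).
  rewrite identity mulr1 mulrDr; lra.
rewrite ler_pdivrMr ?mulr_gt0 ?ltr0n //.
by have -> : renewal mu n * (2 * J%:R) = 2 * (J%:R * renewal mu n) by ring.
Qed.

Lemma renewal_bounded_below : 0 < mu 1%N ->
  cvg (series (fun s => s%:R * mu s) @ \oo) ->
  exists2 c, 0 < c & forall n, c <= renewal mu n.
Proof.
move=> mu1_gt0 mean_cvg.
have mean_ge0 s : 0 <= s%:R * mu s by rewrite mulr_ge0.
have quarter_gt0 : 0 < 4^-1 :> R by rewrite invr_gt0.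
have [N tail_N] := series_tail_small mean_cvg quarter_gt0.
have mean_tail K : \sum_(t < K | (N.+1 <= t)%N) t%:R * mu t <= 4^-1.
  apply: le_trans (sum_le_subfilter (Q := fun t : 'I_K => (N <= t)%N) _ _) _ => //.
    by move=> t /ltnW.
  exact/(le_trans (series_tail_le mean_ge0 mean_cvg N K))/ltW.
exists (mu 1%N ^+ N.+1 / (2 * N.+1%:R)).
  by rewrite divr_gt0 ?exprn_gt0 ?mulr_gt0 ?ltr0n.
exact/renewal_lower_bound/survival_tail_le.
Qed.

End RenewalLowerBound.

Section LargeParts.
Variable R : realType.
Variable mu : nat -> R.
Hypothesis mu_ge0 : forall s, 0 <= mu s.
Hypothesis mu0 : mu 0%N = 0.
Hypothesis mu_prob : series mu @ \oo --> (1 : R).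
Hypothesis mean_cvg : cvg (series (fun s => s%:R * mu s) @ \oo).

(* E[#parts larger than eps n; E_n] <= n P(eps n < S <= n)
   <= eps^-1 E[S; S > eps n], which tends to 0 since the mean is finite. *)
Lemma big_parts_vanish (eps : R) : 0 < eps ->
  (fun n => big_parts mu (fun t : nat => eps * n%:R < t%:R) n) @ \oo --> 0.
Proof.
move=> eps_gt0.
have mean_ge0 s : 0 <= s%:R * mu s by rewrite mulr_ge0.
apply/cvgrPdist_lt => d d_gt0.
have [N tail_N] := series_tail_small mean_cvg (mulr_gt0 d_gt0 eps_gt0).
near=> n; have N_le : N%:R / eps <= n%:R by near: n; exact: nbhs_infty_ger.
set P := fun t : nat => eps * n%:R < t%:R.
rewrite sub0r normrN ger0_norm ?big_parts_ge0 //.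
apply: le_lt_trans (big_parts_le mu_ge0 mu0 (series_partial_le mu_ge0 mu_prob) P n) _.
have mass_le : n%:R * part_mass mu P n <=
    eps^-1 * \sum_(t < n.+1 | (N <= t)%N) t%:R * mu t.
  rewrite /part_mass mulr_sumr [X in _ <= _ * X]big_mkcond big_ord_recl /=.
  rewrite mul0r if_same add0r mulr_sumr; apply: ler_sum => t _.
  rewrite /P /bump /= add1n.
  case: (ltrP (eps * n%:R) t.+1%:R) => [large|_] /=; last first.
    by rewrite mulr0n !mulr0 mulr_ge0 ?invr_ge0 ?(ltW eps_gt0) //; case: ifP; rewrite ?mean_ge0.
  have -> : (N <= t.+1)%N.
    rewrite -(ler_nat R); apply/ltW/(le_lt_trans _ large).
    by rewrite mulrC -ler_pdivrMr.
  by rewrite mulr1 mulrA ler_wpM2r // mulrC ler_pdivlMr // mulrC ltW.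
apply: (le_lt_trans mass_le); rewrite -ltr_pdivlMl ?invr_gt0 // invrK mulrC.
exact: le_lt_trans (series_tail_le mean_ge0 mean_cvg N n.+1) tail_N.
Unshelve. all: end_near.
Qed.

End LargeParts.

Lemma esc_prob_ge0 (R : realType) (mu : nat -> R) n (Ev : {set {set 'I_n}} -> bool) :
  (forall s, 0 <= mu s) -> 0 <= esc_prob mu n Ev.
Proof.
move=> mu_ge0; apply: mulr_ge0; last by rewrite invr_ge0 prob_E_renewal renewal_ge0.
apply: sumr_ge0 => k _; apply: sumr_ge0 => s _.
by rewrite mulr_ge0 ?divr_ge0 // comp_weightE weight_ge0.
Qed.

Unset Implicit Arguments.
Set Strict Implicit.

Theorem theorem3 (R : realType) (mu : nat -> R)
  (mu_ge0 : forall s, 0 <= mu s)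
  (mu0 : mu 0%N = 0)
  (mu_prob : series mu @ \oo --> (1 : R))
  (mu1 : 0 < mu 1%N)
  (mu_mean : cvg (series (fun s => s%:R * mu s) @ \oo)) :
  forall eps : R, 0 < eps ->
    (fun n : nat =>
       esc_prob mu n (fun P => eps < (max_block P)%:R / n%:R)) @ \oo --> (0 : R).
Proof.
move=> eps eps_gt0.
have [c c_gt0 c_le_renewal] := renewal_bounded_below mu_ge0 mu0 mu_prob mu1 mu_mean.
set big_n := fun n : nat => big_parts mu (fun t : nat => eps * n%:R < t%:R) n.
have bound_vanish : (fun n => big_n n / c) @ \oo --> 0.
  by rewrite -(mul0r c^-1); apply: cvgMl; exact: big_parts_vanish.
apply: (squeeze_cvgr _ (cvg_cst 0) bound_vanish); near=> n.
rewrite esc_prob_ge0 //=; apply: le_trans (esc_prob_le mu_ge0 n eps_gt0) _.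
rewrite ler_wpM2l ?big_parts_ge0 // lef_pV2 ?posrE //.
exact: lt_le_trans c_gt0 (c_le_renewal n).
Unshelve. all: end_near.
Qed.
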